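(* Consider problem (P) and suppose Assumptions A, B, C and E hold. If $\bar F$ is a KL function with exponent $\alpha\in[0,1)$, then $F$ is also a KL function with exponent $\alpha$.
   Context: Problem (P): $\min_{x\in\mathbb R^n}F(x):=f(x)+P_1(x)-P_2(x)+\delta_{\{g\le 0\}}(x)$, where $f:\mathbb R^n\to\mathbb R$ is continuously differentiable, $P_1,P_2:\mathbb R^n\to\mathbb R$ are convex and continuous, $g=(g_1,\dots,g_m):\mathbb R^n\to\mathbb R^m$ is continuous with $\{x:g(x)\le0\}\neq\emptyset$ (componentwise inequalities), $\delta_C$ the indicator function of $C$; $\partial$ is the limiting subdifferential. Assumption A: (i) $\nabla f$ is Lipschitz with modulus $L_f$; (ii) each $g_i$ is differentiable with $\nabla g_i$ Lipschitz with modulus $L_{g_i}$; (iii) $F$ is level-bounded. Assumption B (MFCQ): each $g_i$ is continuously differentiable and for every $x$ with $g(x)\le0$ there is $d$ with $\langle\nabla g_i(x),d\rangle<0$ for all $i\in I(x):=\{j:g_j(x)=0\}$. Assumption C: each $g_i$ is twice continuously differentiable. Assumption E: $P_2\equiv0$ and $f,g_1,\dots,g_m$ are convex. $\bar G(x,y,w)\in\mathbb R^m$ ($x,y\in\mathbb R^n,w\in\mathbb R^m$) has components $\bar G_i(x,y,w)=g_i(y)+\langle\nabla g_i(y),x-y\rangle+\frac{w_i}{2}\|x-y\|^2$, and $\bar F(x,y,w):=f(x)+P_1(x)-P_2(x)+\delta_{\{\bar G\le0\}}(x,y,w)$. KL function with exponent $\alpha\in[0,1)$: a proper closed $h$ such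 that at every $\hat x\in{\rm dom}\,\partial h$ there exist $a\in(0,\infty]$, a neighborhood $V$ of $\hat x$ and $a_0>0$ with $a_0(1-\alpha)(h(x)-h(\hat x))^{-\alpha}\,{\rm dist}(0,\partial h(x))\ge1$ for all $x\in V$ with $h(\hat x)<h(x)<h(\hat x)+a$. *)

From mathcomp Require Import ssreflect ssrfun ssrbool eqtype ssrnat seq fintype bigop.
From Stdlib Require Import Reals ClassicalEpsilon.
Set Implicit Arguments.
Unset Strict Implicit.
Open Scope R_scope.

Definition vec (n : nat) := 'I_n -> R.
Definition vdot {n} (x y : vec n) : R := \big[Rplus/0]_(i < n) (x i * y i).
Definition vadd {n} (x y : vec n) : vec n := fun i => x i + y i.
Definition vsub {n} (x y : vec n) : vec n := fun i => x i - y i.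
Definition vscal {n} (a : R) (x : vec n) : vec n := fun i => a * x i.
Definition vnorm {n} (x : vec n) : R := sqrt (vdot x x).
Definition matvec {n} (M : 'I_n -> 'I_n -> R) (x : vec n) : vec n :=
  fun i => \big[Rplus/0]_(j < n) (M i j * x j).

Record Euc := { car : Type; csub : car -> car -> car; cdot : car -> car -> R }.
Definition cnorm (E : Euc) (v : car E) : R := sqrt (cdot v v).

Definition vecE (n : nat) : Euc := {| car := vec n; csub := @vsub n; cdot := @vdot n |}.

Definition tripE (n m : nat) : Euc :=
  {| car := (vec n * vec n * vec m)%type;
     csub := fun a b => (vsub (fst (fst a)) (fst (fst b)),
                         vsub (snd (fst a)) (snd (fst b)),
                         vsub (snd a) (snd b));
     cdot := fun a b => vdot (fst (fst a)) (fst (fst b))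
                        + vdot (snd (fst a)) (snd (fst b))
                        + vdot (snd a) (snd b) |}.

(* ---------- extended reals (None = +infinity) ---------- *)
Definition ereal := option R.
Definition r_le_e (r : R) (e : ereal) : Prop :=
  match e with None => True | Some a => r <= a end.
Definition r_lt_e (r : R) (e : ereal) : Prop :=
  match e with None => True | Some a => r < a end.

(* value r if P holds, +infinity otherwise: r + indicator of P *)
Definition add_ind (P : Prop) (r : R) : ereal :=
  match excluded_middle_informative P with left _ => Some r | right _ => None end.

Definition proper (E : Euc) (h : car E -> ereal) : Prop :=
  exists x r, h x = Some r.

Definition lsc (E : Euc) (h : car E -> ereal) : Prop :=
  forall x t, r_lt_e t (h x) ->
    exists del, 0 < del /\ forall z, cnorm (csub z x) < del -> r_lt_e t (h z).

Definition frechet_sub (E : Euc) (h : car E -> ereal) (x v : car E) : Prop :=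
  exists hx, h x = Some hx /\
    forall eps, 0 < eps -> exists del, 0 < del /\
      forall z, cnorm (csub z x) < del ->
        r_le_e (hx + cdot v (csub z x) - eps * cnorm (csub z x)) (h z).

Definition limiting_sub (E : Euc) (h : car E -> ereal) (x v : car E) : Prop :=
  exists (xs vs : nat -> car E) (hs : nat -> R) (hx : R),
    h x = Some hx /\
    Un_cv (fun k => cnorm (csub (xs k) x)) 0 /\
    (forall k, h (xs k) = Some (hs k)) /\ Un_cv hs hx /\
    (forall k, frechet_sub h (xs k) (vs k)) /\
    Un_cv (fun k => cnorm (csub (vs k) v)) 0.

(* KL function with exponent alpha.  a in (0,+infinity] is an ereal;
   dist(0, dh(x)) >= c is written as: every v in dh(x) has norm >= c
   (dist to the empty set = +infinity). *)
Definition KL_exp (E : Euc) (h : car E -> ereal) (alpha : R) : Prop :=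
  proper h /\ lsc h /\
  forall xh, (exists v, limiting_sub h xh v) ->
    exists hxh, h xh = Some hxh /\
    exists (a : ereal), r_lt_e 0 a /\
    exists del a0, 0 < del /\ 0 < a0 /\
      forall x hx, cnorm (csub x xh) < del -> h x = Some hx ->
        hxh < hx -> r_lt_e (hx - hxh) a ->
        forall v, limiting_sub h x v ->
          a0 * (1 - alpha) * Rpower (hx - hxh) (- alpha) * cnorm v >= 1.

Definition has_grad {n} (f : vec n -> R) (gf : vec n -> vec n) : Prop :=
  forall x eps, 0 < eps -> exists del, 0 < del /\ forall y, vnorm (vsub y x) < del ->
    Rabs (f y - f x - vdot (gf x) (vsub y x)) <= eps * vnorm (vsub y x).

Definition has_jac {n} (G : vec n -> vec n) (H : vec n -> 'I_n -> 'I_n -> R) : Prop :=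
  forall x eps, 0 < eps -> exists del, 0 < del /\ forall y, vnorm (vsub y x) < del ->
    vnorm (vsub (vsub (G y) (G x)) (matvec (H x) (vsub y x))) <= eps * vnorm (vsub y x).

Definition rcont {n} (f : vec n -> R) : Prop :=
  forall x eps, 0 < eps -> exists del, 0 < del /\ forall y, vnorm (vsub y x) < del ->
    Rabs (f y - f x) < eps.

Definition vcont {n} (G : vec n -> vec n) : Prop :=
  forall x eps, 0 < eps -> exists del, 0 < del /\ forall y, vnorm (vsub y x) < del ->
    vnorm (vsub (G y) (G x)) < eps.

Definition lipschitz {n} (G : vec n -> vec n) (L : R) : Prop :=
  forall x y, vnorm (vsub (G x) (G y)) <= L * vnorm (vsub x y).

Definition convex {n} (P : vec n -> R) : Prop :=
  forall x y lam, 0 <= lam <= 1 ->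
    P (vadd (vscal lam x) (vscal (1 - lam) y)) <= lam * P x + (1 - lam) * P y.

Definition level_bounded {n} (F : vec n -> ereal) : Prop :=
  forall t, exists M, forall x r, F x = Some r -> r <= t -> vnorm x <= M.

Definition feasible {n m} (g : 'I_m -> vec n -> R) (x : vec n) : Prop :=
  forall i, g i x <= 0.

Definition Fobj {n m} (f P1 P2 : vec n -> R) (g : 'I_m -> vec n -> R) (x : vec n) : ereal :=
  add_ind (feasible g x) (f x + P1 x - P2 x).

Definition Gbar {n m} (g : 'I_m -> vec n -> R) (gg : 'I_m -> vec n -> vec n)
  (x y : vec n) (w : vec m) (i : 'I_m) : R :=
  g i y + vdot (gg i y) (vsub x y) + w i / 2 * (vnorm (vsub x y)) ^ 2.

Definition Fbar {n m} (f P1 P2 : vec n -> R) (g : 'I_m -> vec n -> R)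
  (gg : 'I_m -> vec n -> vec n) (u : car (tripE n m)) : ereal :=
  let x := fst (fst u) in let y := snd (fst u) in let w := snd u in
  add_ind (forall i, Gbar g gg x y w i <= 0) (f x + P1 x - P2 x).

(* MFCQ (Assumption B, with gg i the gradient of g i) *)
Definition MFCQ {n m} (g : 'I_m -> vec n -> R) (gg : 'I_m -> vec n -> vec n) : Prop :=
  forall x, feasible g x -> exists d : vec n,
    forall i, g i x = 0 -> vdot (gg i x) d < 0.

Arguments KL_exp E h alpha : clear implicits.

(* Fix weights w_i >= 2 Lip(grad g_i) + 1.  The descent lemma gives
   g_i(x) <= Gbar_i(x, y, u) whenever u_i >= 2 Lip(grad g_i), so near the slice
   {(x, x, w)} the constraint Gbar <= 0 forces x to be feasible, while on the
   slice itself Gbar(x, x, w) = g(x).  Hence F(x) = Fbar(x, x, w), every Frechet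
   (hence every limiting) subgradient v of F at x lifts to the subgradient
   (v, 0, 0) of Fbar at (x, x, w), of the same norm, and the KL inequality of
   Fbar at (xh, xh, w) restricts to that of F at xh. *)

From mathcomp Require Import ssreflect ssrfun fintype bigop.
From Stdlib Require Import Reals Lra FunctionalExtensionality ClassicalEpsilon.
Open Scope R_scope.
Set Implicit Arguments.

Lemma big_Rplus_split n (F G : 'I_n -> R) :
  \big[Rplus/0]_(i < n) (F i + G i) =
  \big[Rplus/0]_(i < n) F i + \big[Rplus/0]_(i < n) G i.
Proof.
elim: n F G => [|n IH] F G; first by rewrite !big_ord0; lra.
by rewrite !big_ord_recl IH; ring.
Qed.

Lemma big_Rplus_scale n (a : R) (F : 'I_n -> R) :
  \big[Rplus/0]_(i < n) (a * F i) = a * \big[Rplus/0]_(i < n) F i.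
Proof.
elim: n F => [|n IH] F; first by rewrite !big_ord0; lra.
by rewrite !big_ord_recl IH; ring.
Qed.

Lemma big_Rplus_eq0 n (F : 'I_n -> R) :
  (forall i, F i = 0) -> \big[Rplus/0]_(i < n) F i = 0.
Proof.
move=> F0; rewrite (eq_bigr (fun i => 0 * F i)); last by move=> i _; rewrite F0; ring.
by rewrite big_Rplus_scale; ring.
Qed.

Lemma big_Rplus_ge0 n (F : 'I_n -> R) :
  (forall i, 0 <= F i) -> 0 <= \big[Rplus/0]_(i < n) F i.
Proof.
elim: n F => [|n IH] F F0; first by rewrite big_ord0; lra.
rewrite big_ord_recl.
have := IH (fun i => F (lift ord0 i)) (fun i => F0 _); have := F0 ord0; lra.
Qed.

Lemma big_Rplus_ge_term n (F : 'I_n -> R) j :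
  (forall i, 0 <= F i) -> F j <= \big[Rplus/0]_(i < n) F i.
Proof.
elim: n F j => [|n IH] F j F0; first by case: j.
rewrite big_ord_recl; case: (unliftP ord0 j) => [j' ->|->].
- have := IH (fun i => F (lift ord0 i)) j' (fun i => F0 _); have := F0 ord0; lra.
- rewrite -[X in X <= _]Rplus_0_r; apply: Rplus_le_compat_l.
  exact: big_Rplus_ge0.
Qed.

Definition vzero (n : nat) : vec n := fun _ => 0.
Arguments vzero : clear implicits.

Section Vectors.
Variable n : nat.
Implicit Types (a b d x : vec n).

Lemma vdot_ge0 a : 0 <= vdot a a.
Proof. by apply: big_Rplus_ge0 => i; nra. Qed.

Lemma vnorm_ge0 a : 0 <= vnorm a.
Proof. exact: sqrt_pos. Qed.

Lemma vdot_subl a b d : vdot (vsub a b) d = vdot a d - vdot b d.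
Proof.
rewrite /vdot (eq_bigr (fun i => a i * d i + (-1) * (b i * d i))); last first.
  by move=> i _; rewrite /vsub; ring.
by rewrite big_Rplus_split big_Rplus_scale; ring.
Qed.

Lemma vdot_scaler a h d : vdot a (vscal h d) = h * vdot a d.
Proof.
rewrite /vdot -big_Rplus_scale; apply: eq_bigr => i _; rewrite /vscal; ring.
Qed.

Lemma vdot0l a : vdot (vzero n) a = 0.
Proof. by apply: big_Rplus_eq0 => i; rewrite /vzero; ring. Qed.

Lemma vdot_subvv a x : vdot a (vsub x x) = 0.
Proof. by apply: big_Rplus_eq0 => i; rewrite /vsub; ring. Qed.

Lemma vnorm_subvv x : vnorm (vsub x x) = 0.
Proof. by rewrite /vnorm vdot_subvv sqrt_0. Qed.

Lemma vsub00 : vsub (vzero n) (vzero n) = vzero n.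
Proof. by apply: functional_extensionality => i; rewrite /vsub /vzero; ring. Qed.

Lemma vnorm_scal h d : vnorm (vscal h d) = Rabs h * vnorm d.
Proof.
rewrite /vnorm vdot_scaler /vdot.
rewrite (eq_bigr (fun i => h * (d i * d i))); last by move=> i _; rewrite /vscal; ring.
rewrite big_Rplus_scale -Rmult_assoc sqrt_mult_alt; last exact: Rle_0_sqr.
by rewrite sqrt_Rsqr_abs.
Qed.

Lemma vnorm_coord_le a j : Rabs (a j) <= vnorm a.
Proof.
rewrite -sqrt_Rsqr_abs /vnorm; apply: sqrt_le_1_alt.
by apply: (big_Rplus_ge_term (fun i => a i * a i)) => i; nra.
Qed.

(* Cauchy-Schwarz: the quadratic t |-> |a - t b|^2 is nonnegative. *)
Lemma vdot_le_vnorm a b : vdot a b <= vnorm a * vnorm b.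
Proof.
set A := vdot a a; set B := vdot b b; set C := vdot a b.
have quad t : 0 <= A - 2 * t * C + t * t * B.
  have <- : vdot (fun j => a j - t * b j) (fun j => a j - t * b j) =
            A - 2 * t * C + t * t * B.
    rewrite /vdot (eq_bigr (fun i =>
      (a i * a i + (-2 * t) * (a i * b i)) + (t * t) * (b i * b i))); last first.
      by move=> i _; ring.
    by rewrite !big_Rplus_split !big_Rplus_scale /A /B /C /vdot; ring.
  exact: vdot_ge0.
have A0 : 0 <= A by exact: vdot_ge0.
have B0 : 0 <= B by exact: vdot_ge0.
have C2 : C * C <= A * B.
  have [B_eq0 | B_neq0] := Req_dec B 0.
  - have [C_eq0 | C_neq0] := Req_dec C 0; first by rewrite C_eq0 B_eq0; nra.
    have := quad ((A + 1) / (2 * C)); rewrite B_eq0.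
    have -> : A - 2 * ((A + 1) / (2 * C)) * C + (A + 1) / (2 * C) * ((A + 1) / (2 * C)) * 0
              = -1 by field.
    lra.
  - have := quad (C / B).
    have -> : A - 2 * (C / B) * C + C / B * (C / B) * B = (A * B - C * C) / B by field.
    move=> H; have : 0 <= (A * B - C * C) / B * B by nra.
    have -> : (A * B - C * C) / B * B = A * B - C * C by field.
    lra.
rewrite /vnorm -/A -/B -sqrt_mult //.
apply: Rle_trans (Rle_abs C) _; rewrite -sqrt_Rsqr_abs.
exact: sqrt_le_1_alt.
Qed.

End Vectors.

Section Descent.
Variables (n : nat) (g : vec n -> R) (gg : vec n -> vec n).
Hypothesis g_grad : has_grad g gg.

Lemma has_grad_line_derivative y d t :
  derivable_pt_lim (fun s => g (vadd y (vscal s d)))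
    t (vdot (gg (vadd y (vscal t d))) d).
Proof.
set p := fun s => vadd y (vscal s d).
have Nd := vnorm_ge0 d.
move=> eps eps_gt0.
have eps'_gt0 : 0 < eps / (vnorm d + 1) by apply: Rdiv_lt_0_compat; lra.
have [del [del_gt0 Hdel]] := g_grad (p t) eps'_gt0.
have del'_gt0 : 0 < del / (vnorm d + 1) by apply: Rdiv_lt_0_compat; lra.
exists (mkposreal _ del'_gt0) => h h_neq0 /= h_small.
have step : vsub (p (t + h)) (p t) = vscal h d.
  by apply: functional_extensionality => j; rewrite /vsub /p /vadd /vscal; ring.
have h_pos := Rabs_pos_lt h h_neq0.
have near : vnorm (vsub (p (t + h)) (p t)) < del.
  rewrite step vnorm_scal.
  apply: Rle_lt_trans (_ : Rabs h * vnorm d <= Rabs h * (vnorm d + 1)) _; first nra.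
  have -> : del = del / (vnorm d + 1) * (vnorm d + 1) by field; lra.
  by apply: Rmult_lt_compat_r; lra.
have := Hdel _ near; rewrite step vnorm_scal vdot_scaler => Hb.
apply: (Rmult_lt_reg_r (Rabs h)) => //.
rewrite -Rabs_mult.
have -> : ((g (p (t + h)) - g (p t)) / h - vdot (gg (p t)) d) * h =
          g (p (t + h)) - g (p t) - h * vdot (gg (p t)) d by field.
apply: Rle_lt_trans Hb _.
have -> : eps / (vnorm d + 1) * (Rabs h * vnorm d) =
          eps * Rabs h * (vnorm d / (vnorm d + 1)) by field; lra.
have : vnorm d / (vnorm d + 1) < 1.
  by apply: (Rmult_lt_reg_r (vnorm d + 1)); [lra | field_simplify; lra].
have := Rmult_lt_0_compat _ _ eps_gt0 h_pos; nra.
Qed.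

(* The descent lemma, with the constant |L| instead of the sharp L/2. *)
Lemma lipschitz_grad_descent L : lipschitz gg L ->
  forall y z, g z <= g y + vdot (gg y) (vsub z y) + Rabs L * vnorm (vsub z y) ^ 2.
Proof.
move=> gg_lip y z; set d := vsub z y.
set p := fun s => vadd y (vscal s d).
have [c [mvt [c_gt0 c_lt1]]] := MVT_cor2 _ _ 0 1 Rlt_0_1
  (fun c _ => has_grad_line_derivative y d c).
have p1 : p 1 = z.
  by apply: functional_extensionality => j; rewrite /p /d /vadd /vscal /vsub; ring.
have p0 : p 0 = y.
  by apply: functional_extensionality => j; rewrite /p /vadd /vscal; ring.
have pc : vsub (p c) y = vscal c d.
  by apply: functional_extensionality => j; rewrite /p /vadd /vscal /vsub; ring.
rewrite -/(p 1) -/(p 0) -/(p c) p1 p0 Rminus_0_r Rmult_1_r in mvt.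
have split_grad : vdot (gg (p c)) d =
                  vdot (gg y) d + vdot (vsub (gg (p c)) (gg y)) d.
  by rewrite vdot_subl; ring.
have CS := vdot_le_vnorm (vsub (gg (p c)) (gg y)) d.
have lip := gg_lip (p c) y.
rewrite pc vnorm_scal Rabs_pos_eq in lip; last lra.
have Nd := vnorm_ge0 d.
have Lc : L * c <= Rabs L by have := Rle_abs L; have := Rabs_pos L; nra.
have : vnorm (vsub (gg (p c)) (gg y)) * vnorm d <= Rabs L * vnorm d ^ 2.
  apply: (Rle_trans _ (L * c * vnorm d ^ 2)).
    by have := Rmult_le_compat_r _ _ _ Nd lip; lra.
  by apply: Rmult_le_compat_r => //; apply: pow2_ge_0.
lra.
Qed.

End Descent.

Lemma Gbar_nonpos_feasible n m (g : 'I_m -> vec n -> R) gg (L : 'I_m -> R) x y u :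
  (forall i, has_grad (g i) (gg i)) -> (forall i, lipschitz (gg i) (L i)) ->
  (forall i, 2 * Rabs (L i) <= u i) ->
  (forall i, Gbar g gg x y u i <= 0) -> feasible g x.
Proof.
move=> g_grad gg_lip u_ge Gbar_le i.
have := lipschitz_grad_descent (g_grad i) (gg_lip i) y x.
have := Gbar_le i; rewrite /Gbar.
have := Rmult_le_compat_r _ _ _ (pow2_ge_0 (vnorm (vsub x y))) (u_ge i).
lra.
Qed.

Lemma Un_cv0_dominated (a b : nat -> R) C :
  0 <= C -> (forall k, 0 <= b k <= C * a k) -> Un_cv a 0 -> Un_cv b 0.
Proof.
move=> C_ge0 b_le a_cv eps eps_gt0.
have eps'_gt0 : 0 < eps / (C + 1) by apply: Rdiv_lt_0_compat; lra.
have [N HN] := a_cv _ eps'_gt0.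
exists N => k k_ge; have := HN k k_ge; have [bk0 bk] := b_le k.
rewrite /R_dist !Rminus_0_r (Rabs_pos_eq (b k)) // => /(Rle_lt_trans _ _ _ (Rle_abs _)) ak.
have -> : eps = C * (eps / (C + 1)) + eps / (C + 1) by field; lra.
nra.
Qed.

Section Triples.
Variables n m : nat.

Lemma tripE_norm_diag (a b : vec n) (w : vec m) :
  @cnorm (tripE n m) (@csub (tripE n m) (a, a, w) (b, b, w)) <= 2 * vnorm (vsub a b).
Proof.
rewrite /cnorm /vnorm /= !vdot_subvv Rplus_0_r.
have D0 := vdot_ge0 (vsub a b); set D := vdot _ _ in D0 *.
rewrite -(sqrt_square (2 * sqrt D)); last by have := sqrt_pos D; lra.
apply: sqrt_le_1_alt.
have -> : 2 * sqrt D * (2 * sqrt D) = 4 * (sqrt D * sqrt D) by ring.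
rewrite sqrt_sqrt //; lra.
Qed.

Lemma tripE_norm_fst (a : vec n) :
  @cnorm (tripE n m) (a, vzero n, vzero m) = vnorm a.
Proof. by rewrite /cnorm /= !vdot0l /vnorm !Rplus_0_r. Qed.

Lemma tripE_norm_sub_fst (a b : vec n) :
  @cnorm (tripE n m) (@csub (tripE n m) (a, vzero n, vzero m) (b, vzero n, vzero m))
  = vnorm (vsub a b).
Proof. by rewrite /= !vsub00 tripE_norm_fst. Qed.

Lemma tripE_norm_ge_fst (p q : car (tripE n m)) :
  vnorm (vsub p.1.1 q.1.1) <= @cnorm (tripE n m) (@csub (tripE n m) p q).
Proof.
rewrite /cnorm /vnorm /=; apply: sqrt_le_1_alt.
have := vdot_ge0 (vsub p.1.2 q.1.2); have := vdot_ge0 (vsub p.2 q.2); lra.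
Qed.

Lemma tripE_norm_ge_snd (p q : car (tripE n m)) :
  vnorm (vsub p.2 q.2) <= @cnorm (tripE n m) (@csub (tripE n m) p q).
Proof.
rewrite /cnorm /vnorm /=; apply: sqrt_le_1_alt.
have := vdot_ge0 (vsub p.1.1 q.1.1); have := vdot_ge0 (vsub p.1.2 q.1.2); lra.
Qed.

End Triples.

Lemma add_ind_iff (P Q : Prop) r : (P <-> Q) -> add_ind P r = add_ind Q r.
Proof.
rewrite /add_ind => PQ.
by case: (excluded_middle_informative P); case: (excluded_middle_informative Q); tauto.
Qed.

Lemma add_ind_true (P : Prop) r : P -> add_ind P r = Some r.
Proof. by rewrite /add_ind; case: (excluded_middle_informative P). Qed.

Lemma Fbar_slice n m (f P1 P2 : vec n -> R) (g : 'I_m -> vec n -> R) gg x w :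
  Fbar f P1 P2 g gg (x, x, w) = Fobj f P1 P2 g x.
Proof.
have Gbar_diag i : Gbar g gg x x w i = g i x.
  by rewrite /Gbar vdot_subvv vnorm_subvv; ring.
by apply: add_ind_iff; split=> H i; move: (H i); rewrite /= Gbar_diag.
Qed.

Section SliceLift.
Variables (n m : nat) (f P1 P2 : vec n -> R) (g : 'I_m -> vec n -> R)
  (gg : 'I_m -> vec n -> vec n) (w : vec m).
Hypothesis feasible_near_slice : forall x y u, (forall i, Rabs (u i - w i) < 1) ->
  (forall i, Gbar g gg x y u i <= 0) -> feasible g x.

Local Notation F := (Fobj f P1 P2 g).
Local Notation Fb := (Fbar f P1 P2 g gg).

Lemma frechet_sub_slice x v :
  @frechet_sub (vecE n) F x v ->
  @frechet_sub (tripE n m) Fb (x, x, w) (v, vzero n, vzero m).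
Proof.
move=> [hx [Fx Hfr]]; exists hx; split; first by rewrite Fbar_slice.
move=> eps eps_gt0; have [del [del_gt0 Hdel]] := Hfr eps eps_gt0.
exists (Rmin del 1); split; first by apply: Rmin_pos; lra.
move=> [[z y] u] near.
have Nz := tripE_norm_ge_fst (z, y, u) (x, x, w).
have Nu := tripE_norm_ge_snd (z, y, u) (x, x, w).
have := Rmin_l del 1; have := Rmin_r del 1; simpl in Nz, Nu, near => min_le1 min_le_del.
rewrite /Fbar /add_ind /=; case: excluded_middle_informative => //= Gbar_le.
have z_feas : feasible g z.
  apply: (@feasible_near_slice z y u) => // i.
  apply: Rle_lt_trans (vnorm_coord_le (vsub u w) i) _; lra.
have z_near : vnorm (vsub z x) < del by lra.
have : r_le_e (hx + vdot v (vsub z x) - eps * vnorm (vsub z x)) (F z) := Hdel z z_near.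
rewrite /Fobj add_ind_true //= !vdot0l.
have := Rmult_le_compat_l _ _ _ (Rlt_le _ _ eps_gt0) Nz; lra.
Qed.

Lemma limiting_sub_slice x v :
  @limiting_sub (vecE n) F x v ->
  @limiting_sub (tripE n m) Fb (x, x, w) (v, vzero n, vzero m).
Proof.
move=> [xs [vs [hs [hx [Fx [xs_cv [Fxs [hs_cv [xs_fr vs_cv]]]]]]]]].
exists (fun k => (xs k, xs k, w)), (fun k => (vs k, vzero n, vzero m)), hs, hx.
split; first by rewrite Fbar_slice.
split.
  apply: (@Un_cv0_dominated _ _ 2) xs_cv; first lra.
  by move=> k; split; [exact: sqrt_pos | exact: tripE_norm_diag].
split; first by move=> k; rewrite Fbar_slice.
split=> //; split; first by move=> k; apply: frechet_sub_slice.
move=> eps /vs_cv [N HN]; exists N => k /HN.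
by rewrite tripE_norm_sub_fst.
Qed.

Lemma KL_exp_slice alpha : (exists x, feasible g x) ->
  KL_exp (tripE n m) Fb alpha -> KL_exp (vecE n) F alpha.
Proof.
move=> [x0 x0_feas] [_ [Fb_lsc Fb_KL]].
split; first by exists x0, (f x0 + P1 x0 - P2 x0); exact: add_ind_true.
split.
  move=> x t; rewrite -(Fbar_slice f P1 P2 g gg x w) => /Fb_lsc [del [del_gt0 Hdel]].
  exists (del / 2); split=> [|z near]; first lra.
  rewrite -(Fbar_slice f P1 P2 g gg z w); apply: Hdel.
  apply: Rle_lt_trans (tripE_norm_diag z x w) _.
  by change (vnorm (vsub z x) < del / 2) in near; lra.
move=> xh [v /limiting_sub_slice v_sub].
have [hxh [Fxh [a [a_pos [del [a0 [del_gt0 [a0_gt0 KL]]]]]]]] :=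
  Fb_KL _ (ex_intro _ _ v_sub).
exists hxh; split; first by rewrite -(Fbar_slice f P1 P2 g gg xh w).
exists a; split=> //; exists (del / 2), a0; split; first lra; split=> //.
move=> x hx near Fx hx_gt hx_lt v' /limiting_sub_slice v'_sub.
have near' : @cnorm (tripE n m) (@csub (tripE n m) (x, x, w) (xh, xh, w)) < del.
  apply: Rle_lt_trans (tripE_norm_diag x xh w) _.
  by change (vnorm (vsub x xh) < del / 2) in near; lra.
have := KL _ hx near' _ hx_gt hx_lt _ v'_sub.
by rewrite Fbar_slice tripE_norm_fst; apply.
Qed.

End SliceLift.

Theorem mainTheorem12 (n m : nat)
  (f : vec n -> R) (gf : vec n -> vec n) (P1 P2 : vec n -> R)
  (g : 'I_m -> vec n -> R) (gg : 'I_m -> vec n -> vec n) (alpha : R)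
  (* standing assumptions of (P) *)
  (Hf : has_grad f gf) (Hgfc : vcont gf)
  (HP1 : convex P1) (HP1c : rcont P1) (HP2 : convex P2) (HP2c : rcont P2)
  (Hgc : forall i, rcont (g i))
  (Hfeas : exists x, feasible g x)
  (* Assumption A *)
  (HA1 : exists Lf, lipschitz gf Lf)
  (HA2 : forall i, has_grad (g i) (gg i) /\ exists Lg, lipschitz (gg i) Lg)
  (HA3 : level_bounded (Fobj f P1 P2 g))
  (* Assumption B *)
  (HB1 : forall i, vcont (gg i)) (HB2 : MFCQ g gg)
  (* Assumption C *)
  (HC : forall i, exists H, has_jac (gg i) H /\ forall j k, rcont (fun x => H x j k))
  (* Assumption E *)
  (HE1 : forall x, P2 x = 0) (HE2 : convex f) (HE3 : forall i, convex (g i))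
  (Halpha : 0 <= alpha < 1)
  (HKL : KL_exp (tripE n m) (Fbar f P1 P2 g gg) alpha) :
  KL_exp (vecE n) (Fobj f P1 P2 g) alpha.
Proof.
have [L gg_lip] : exists L : 'I_m -> R, forall i, lipschitz (gg i) (L i).
  exists (fun i => proj1_sig (constructive_indefinite_description _ (proj2 (HA2 i)))).
  by move=> i; exact: proj2_sig.
apply: (KL_exp_slice (fun i => 2 * Rabs (L i) + 1) _ Hfeas HKL).
move=> x y u u_near; apply: (Gbar_nonpos_feasible _ (fun i => proj1 (HA2 i)) gg_lip).
by move=> i; have [_ ] := Rabs_def2 _ _ (u_near i); lra.
Qed.
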